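(* For all bunches $\Delta$ and formulas $\varphi,\psi$: if $\Delta\vdash_{\mathsf{cf}}\varphi-\!\!\ast\,\psi$ then $\Delta\mathbin{,}\varphi\vdash_{\mathsf{cf}}\psi$; and if $\Delta\vdash_{\mathsf{cf}}\varphi\to\psi$ then $\Delta\mathbin{;}\varphi\vdash_{\mathsf{cf}}\psi$.
   Context: Formulas of BI: $\varphi,\psi ::= \top \mid \bot \mid \varphi\wedge\psi \mid \varphi\vee\psi \mid \varphi\to\psi \mid \mathsf{emp} \mid \varphi\ast\psi \mid \varphi -\!\!\ast\, \psi \mid a$, $a\in\mathrm{Atom}$. Bunches are finite binary trees whose leaves are formulas or empty bunches $\varnothing_m,\varnothing_a$ and whose internal nodes are labelled by the multiplicative comma ($\Delta_1\mathbin{,}\Delta_2$) or the additive semicolon ($\Delta_1\mathbin{;}\Delta_2$). A bunched context $\Delta(-)$ is a bunch with one leaf replaced by a hole; $\Delta(\Gamma)$ fills it with $\Gamma$. Bunch equivalence $\equiv$ is the least equivalence relation making $\mathbin{,}$ commutative, associative with unit $\varnothing_m$, $\mathbin{;}$ commutative, associative with unit $\varnothing_a$, and closed under contexts. The cut-free BI sequent calculus ($\Delta\vdash_{\mathsf{cf}}\varphi$) has the rules: (ax) $a\vdash a$ for atoms $a$; (equiv) from $\Delta'\vdash\varphi$, $\Delta\equiv\Delta'$ infer $\Delta\vdash\varphi$; (W;) from $\Delta(\Delta_1)\vdash\varphi$ infer $\Delta(\Delta_1\mathbin{;}\Delta_2)\vdash\varphi$; (C;) from $\Delta(\Delta_1\mathbin{;}\Delta_1)\vdash\varphi$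 infer $\Delta(\Delta_1)\vdash\varphi$; (empR) $\varnothing_m\vdash\mathsf{emp}$; (empL) from $\Delta(\varnothing_m)\vdash\varphi$ infer $\Delta(\mathsf{emp})\vdash\varphi$; ($\ast$R) from $\Delta_1\vdash\varphi$, $\Delta_2\vdash\psi$ infer $\Delta_1\mathbin{,}\Delta_2\vdash\varphi\ast\psi$; ($\ast$L) from $\Delta(\varphi\mathbin{,}\psi)\vdash\chi$ infer $\Delta(\varphi\ast\psi)\vdash\chi$; ($-\!\ast$R) from $\Delta\mathbin{,}\varphi\vdash\psi$ infer $\Delta\vdash\varphi-\!\!\ast\,\psi$; ($-\!\ast$L) from $\Delta_1\vdash\varphi$, $\Delta(\Delta_2\mathbin{,}\psi)\vdash\chi$ infer $\Delta((\Delta_1\mathbin{,}\Delta_2)\mathbin{,}(\varphi-\!\!\ast\,\psi))\vdash\chi$; ($\top$R) $\varnothing_a\vdash\top$; ($\top$L) from $\Delta(\varnothing_a)\vdash\varphi$ infer $\Delta(\top)\vdash\varphi$; ($\wedge$R) from $\Delta_1\vdash\varphi$, $\Delta_2\vdash\psi$ infer $\Delta_1\mathbin{;}\Delta_2\vdash\varphi\wedge\psi$; ($\wedge$L) from $\Delta(\varphi\mathbin{;}\psi)\vdash\chi$ infer $\Delta(\varphi\wedge\psi)\vdash\chi$; ($\to$R) from $\Delta\mathbin{;}\varphi\vdash\psi$ infer $\Delta\vdash\varphi\to\psi$; ($\to$L) from $\Delta_1\vdash\varphi$, $\Delta(\Delta_2\mathbin{;}\psi)\vdash\chi$ infer $\Delta((\Delta_1\mathbin{;}\Delta_2)\mathbin{;}(\varphi\to\psi))\vdash\chi$;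 ($\bot$L) $\Delta(\bot)\vdash\varphi$; ($\vee$R1/2) from $\Delta\vdash\varphi$ (resp. $\Delta\vdash\psi$) infer $\Delta\vdash\varphi\vee\psi$; ($\vee$L) from $\Delta(\varphi)\vdash\chi$, $\Delta(\psi)\vdash\chi$ infer $\Delta(\varphi\vee\psi)\vdash\chi$. (No cut rule.) A formula used as a bunch denotes the single-leaf bunch. *)

Set Implicit Arguments.

Definition atom := nat.

Inductive formula : Type :=
| FTop | FBot
| FAnd (p q : formula) | FOr (p q : formula) | FImp (p q : formula)
| FEmp | FStar (p q : formula) | FWand (p q : formula)
| FAtom (a : atom).

Inductive bunch : Type :=
| BForm (p : formula)
| BEmpM
| BEmpA
| BComma (d1 d2 : bunch)
| BSemi (d1 d2 : bunch).

Inductive bctx : Type :=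
| CHole
| CCommaL (c : bctx) (d : bunch)
| CCommaR (d : bunch) (c : bctx)
| CSemiL (c : bctx) (d : bunch)
| CSemiR (d : bunch) (c : bctx).

Fixpoint fill (c : bctx) (g : bunch) : bunch :=
  match c with
  | CHole => g
  | CCommaL c d => BComma (fill c g) d
  | CCommaR d c => BComma d (fill c g)
  | CSemiL c d => BSemi (fill c g) d
  | CSemiR d c => BSemi d (fill c g)
  end.

Inductive beq : bunch -> bunch -> Prop :=
| beq_refl d : beq d d
| beq_sym d1 d2 : beq d1 d2 -> beq d2 d1
| beq_trans d1 d2 d3 : beq d1 d2 -> beq d2 d3 -> beq d1 d3
| beq_comma_comm d1 d2 : beq (BComma d1 d2) (BComma d2 d1)
| beq_comma_assoc d1 d2 d3 :
    beq (BComma d1 (BComma d2 d3)) (BComma (BComma d1 d2) d3)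
| beq_comma_unit d : beq (BComma d BEmpM) d
| beq_semi_comm d1 d2 : beq (BSemi d1 d2) (BSemi d2 d1)
| beq_semi_assoc d1 d2 d3 :
    beq (BSemi d1 (BSemi d2 d3)) (BSemi (BSemi d1 d2) d3)
| beq_semi_unit d : beq (BSemi d BEmpA) d
| beq_ctx c d1 d2 : beq d1 d2 -> beq (fill c d1) (fill c d2).

Inductive cf : bunch -> formula -> Prop :=
| cf_ax a : cf (BForm (FAtom a)) (FAtom a)
| cf_equiv D D' p : cf D' p -> beq D D' -> cf D p
| cf_W c D1 D2 p : cf (fill c D1) p -> cf (fill c (BSemi D1 D2)) p
| cf_C c D1 p : cf (fill c (BSemi D1 D1)) p -> cf (fill c D1) p
| cf_empR : cf BEmpM FEmp
| cf_empL c p : cf (fill c BEmpM) p -> cf (fill c (BForm FEmp)) p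
| cf_starR D1 D2 p q : cf D1 p -> cf D2 q -> cf (BComma D1 D2) (FStar p q)
| cf_starL c p q r :
    cf (fill c (BComma (BForm p) (BForm q))) r -> cf (fill c (BForm (FStar p q))) r
| cf_wandR D p q : cf (BComma D (BForm p)) q -> cf D (FWand p q)
| cf_wandL c D1 D2 p q r :
    cf D1 p -> cf (fill c (BComma D2 (BForm q))) r ->
    cf (fill c (BComma (BComma D1 D2) (BForm (FWand p q)))) r
| cf_topR : cf BEmpA FTop
| cf_topL c p : cf (fill c BEmpA) p -> cf (fill c (BForm FTop)) p
| cf_andR D1 D2 p q : cf D1 p -> cf D2 q -> cf (BSemi D1 D2) (FAnd p q)
| cf_andL c p q r :
    cf (fill c (BSemi (BForm p) (BForm q))) r -> cf (fill c (BForm (FAnd p q))) r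
| cf_impR D p q : cf (BSemi D (BForm p)) q -> cf D (FImp p q)
| cf_impL c D1 D2 p q r :
    cf D1 p -> cf (fill c (BSemi D2 (BForm q))) r ->
    cf (fill c (BSemi (BSemi D1 D2) (BForm (FImp p q)))) r
| cf_botL c p : cf (fill c (BForm FBot)) p
| cf_orR1 D p q : cf D p -> cf D (FOr p q)
| cf_orR2 D p q : cf D q -> cf D (FOr p q)
| cf_orL c p q r :
    cf (fill c (BForm p)) r -> cf (fill c (BForm q)) r -> cf (fill c (BForm (FOr p q))) r.


(* The left and structural rules act inside an arbitrary context, so they
   survive framing the antecedent [D] as [fill e D] for a fixed context [e].
   A derivation of [D |- r] can therefore be replayed with [fill e D] in
   place of [D], down to the points where [r] is introduced by a right rule.
   For [r = p -* q] (resp. [p -> q]) that rule can only be -*R (resp. ->R),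
   whose premise is [D, p |- q] (resp. [D; p |- q]), exactly what the frame
   [e := - , p] (resp. [- ; p]) asks for. *)

Fixpoint bctx_comp (e c : bctx) : bctx :=
  match e with
  | CHole => c
  | CCommaL e d => CCommaL (bctx_comp e c) d
  | CCommaR d e => CCommaR d (bctx_comp e c)
  | CSemiL e d => CSemiL (bctx_comp e c) d
  | CSemiR d e => CSemiR d (bctx_comp e c)
  end.

Lemma fill_comp (e c : bctx) (g : bunch) :
  fill (bctx_comp e c) g = fill e (fill c g).
Proof. induction e; simpl; congruence. Qed.

Inductive cf_right : bunch -> formula -> Prop :=
| cf_right_ax a : cf_right (BForm (FAtom a)) (FAtom a)
| cf_right_empR : cf_right BEmpM FEmp
| cf_right_starR D1 D2 p q :
    cf D1 p -> cf D2 q -> cf_right (BComma D1 D2) (FStar p q)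
| cf_right_wandR D p q : cf (BComma D (BForm p)) q -> cf_right D (FWand p q)
| cf_right_topR : cf_right BEmpA FTop
| cf_right_andR D1 D2 p q :
    cf D1 p -> cf D2 q -> cf_right (BSemi D1 D2) (FAnd p q)
| cf_right_impR D p q : cf (BSemi D (BForm p)) q -> cf_right D (FImp p q)
| cf_right_orR1 D p q : cf D p -> cf_right D (FOr p q)
| cf_right_orR2 D p q : cf D q -> cf_right D (FOr p q).

Lemma cf_frame (e : bctx) (r s : formula) :
  (forall D, cf_right D r -> cf (fill e D) s) ->
  forall D, cf D r -> cf (fill e D) s.
Proof.
  intros right_case D H; revert right_case.
  induction H; intro right_case;
    try (apply right_case; constructor; assumption);
    rewrite <- ?fill_comp in *.
  - eapply cf_equiv; [ apply IHcf, right_case | apply beq_ctx; assumption ].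
  - apply cf_W; auto.
  - apply cf_C; auto.
  - apply cf_empL; auto.
  - apply cf_starL; auto.
  - apply cf_wandL; auto.
  - apply cf_topL; auto.
  - apply cf_andL; auto.
  - apply cf_impL; auto.
  - apply cf_botL.
  - apply cf_orL; auto.
Qed.

Lemma cf_wand_inv (D : bunch) (p q : formula) :
  cf D (FWand p q) -> cf (BComma D (BForm p)) q.
Proof.
  apply (cf_frame (CCommaL CHole (BForm p))).
  intros D' H; inversion H; assumption.
Qed.

Lemma cf_imp_inv (D : bunch) (p q : formula) :
  cf D (FImp p q) -> cf (BSemi D (BForm p)) q.
Proof.
  apply (cf_frame (CSemiL CHole (BForm p))).
  intros D' H; inversion H; assumption.
Qed.

Theorem lemma3p2 :
  forall (D : bunch) (p q : formula),
    (cf D (FWand p q) -> cf (BComma D (BForm p)) q) /\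
    (cf D (FImp p q) -> cf (BSemi D (BForm p)) q).
Proof.
  intros D p q; split; [ apply cf_wand_inv | apply cf_imp_inv ].
Qed.
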